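(* For any positive integer $k$, there exist nonisomorphic graphs $G'$ and $G''$ that are cospectral with respect to the adjacency matrix and satisfy $Z(G')>Z(G'')+k$.
   Context: The zero forcing number $Z(G)$ is the minimum size of a set $S\subseteq V(G)$ such that, if the vertices of $S$ are colored blue and all others white, repeated application of the rule ''a blue vertex with exactly one white neighbor forces that neighbor to become blue'' eventually makes every vertex blue. *)

From mathcomp Require Import all_boot all_order all_fingroup all_algebra.
Set Implicit Arguments. Unset Strict Implicit. Unset Printing Implicit Defensive.
Import GRing.Theory.

Definition simple_graph (T : finType) (e : rel T) : Prop :=
  (forall x y, e x y = e y x) /\ (forall x, ~~ e x x).

Definition adjmx (n : nat) (e : rel 'I_n) : 'M[int]_n :=
  \matrix_(i, j) ((e i j)%:R)%R.

(* Cospectral w.r.t. the adjacency matrix: same characteristic polynomial,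
   i.e. the same eigenvalues with the same multiplicities. *)
Definition cospectral (n : nat) (e1 e2 : rel 'I_n) : Prop :=
  char_poly (adjmx e1) = char_poly (adjmx e2).

Definition graph_iso (n : nat) (e1 e2 : rel 'I_n) : Prop :=
  exists f : {perm 'I_n}, forall x y, e1 x y = e2 (f x) (f y).

(* One round of the color change rule: every blue vertex v with exactly
   one white neighbour w forces w to become blue. *)
Definition force_step (T : finType) (e : rel T) (S : {set T}) : {set T} :=
  S :|: [set w | [exists v in S,
          [&& e v w, w \notin S &
              [forall u, (e v u && (u \notin S)) ==> (u == w)]]]].

(* Final colouring obtained from S (the rule stabilizes after #|T| rounds). *)
Definition force_closure (T : finType) (e : rel T) (S : {set T}) : {set T} :=
  iter #|T| (force_step e) S.

Definition zero_forcing_set (T : finType) (e : rel T) (S : {set T}) : bool :=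
  force_closure e S == setT.

(* Zero forcing number: minimum size of a zero forcing set (V itself is one). *)
Definition zero_forcing_number (T : finType) (e : rel T) : nat :=
  \big[minn/#|T|]_(S : {set T} | zero_forcing_set e S) #|S|.

(* Zero forcing numbers add over disjoint unions and characteristic
   polynomials multiply.  The graphs C4 + K2 and the double star (two adjacent
   centres with two leaves each) are cospectral.  Z(C4 + K2) >= 3 because Z(G)
   is at least the minimum degree of G: the first vertex to force has all its
   neighbours but one already blue.  The double star has Z <= 2, as one leaf
   at each centre forces everything.  Hence k+1 disjoint copies of each are
   cospectral with zero forcing numbers >= 3(k+1) and <= 2(k+1), and they are
   not isomorphic since only the second has a vertex of degree 3. *)

From mathcomp Require Import all_boot all_order all_fingroup all_algebra.
Set Implicit Arguments. Unset Strict Implicit. Unset Printing Implicit Defensive.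
Import Order.TTheory GRing.Theory.

Section ExtensiveIteration.
Variables (T : finType) (F : {set T} -> {set T}).
Hypothesis F_ext : forall A : {set T}, A \subset F A.

Lemma iter_extensive_card_fix S : F (iter #|T| F S) = iter #|T| F S.
Proof.
have grow i : F (iter i F S) = iter i F S \/ i <= #|iter i F S|.
  elim: i => [|i IH]; first by right.
  have [fix_i|nfix_i] := eqVneq (F (iter i F S)) (iter i F S).
    by left; rewrite iterS !fix_i.
  right; case: IH => [fix_i|le_i]; first by rewrite fix_i eqxx in nfix_i.
  apply: leq_ltn_trans le_i (proper_card _).
  by rewrite properEneq eq_sym nfix_i F_ext.
case: (grow #|T|) => // le_T; apply/esym/eqP.
by rewrite eqEcard F_ext (leq_trans (max_card _)).
Qed.

Lemma iter_extensive_stable S t : #|T| <= t -> iter t F S = iter #|T| F S.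
Proof.
by move=> le_T; rewrite -(subnK le_T) iterD iter_fix // iter_extensive_card_fix.
Qed.

End ExtensiveIteration.

Definition degree (T : finType) (e : rel T) (x : T) : nat := #|[set y | e x y]|.

Section ZeroForcing.
Variables (T : finType) (e : rel T).
Implicit Types S : {set T}.

Lemma subset_force_step S : S \subset force_step e S.
Proof. exact: subsetUl. Qed.

Lemma force_step_setT : force_step e setT = setT.
Proof. exact: setTU. Qed.

Lemma force_stepP S w :
  reflect (w \in S \/ exists2 v, v \in S &
             [/\ e v w, w \notin S & forall u, e v u -> u \notin S -> u = w])
          (w \in force_step e S).
Proof.
rewrite !inE; apply: (iffP orP) => -[->|]; try by left.
- move=> /existsP[v /andP[vS /and3P[evw wS /forallP vw]]]; right; exists v => //.
  by split=> // u evu uS; apply/eqP; have := vw u; rewrite evu uS.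
- case=> v vS [evw wS vw]; right; apply/existsP; exists v; rewrite vS evw wS /=.
  by apply/forallP => u; apply/implyP => /andP[evu uS]; rewrite (vw u evu uS).
Qed.

Lemma mem_force_step S v w :
  v \in S -> e v w -> (forall u, e v u -> u \notin S -> u = w) ->
  w \in force_step e S.
Proof.
move=> vS evw vw; have [wS|wNS] := boolP (w \in S).
  exact: (subsetP (subset_force_step S)).
by apply/force_stepP; right; exists v.
Qed.

Lemma iter_force_step_setT_mono S t t' :
  t <= t' -> iter t (force_step e) S = setT -> iter t' (force_step e) S = setT.
Proof.
by move=> le_t St; rewrite -(subnK le_t) iterD St iter_fix // force_step_setT.
Qed.

Lemma zero_forcing_setP S :
  reflect (exists t, iter t (force_step e) S = setT) (zero_forcing_set e S).
Proof.
apply: (iffP eqP) => [ZS|[t St]]; first by exists #|T|.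
rewrite /force_closure -(iter_extensive_stable _ _ (leq_addr t _)) //.
  by rewrite iterD St iter_fix // force_step_setT.
exact: subset_force_step.
Qed.

Lemma zero_forcing_setT : zero_forcing_set e setT.
Proof. by apply/zero_forcing_setP; exists 0. Qed.

Lemma zero_forcing_number_le S :
  zero_forcing_set e S -> zero_forcing_number e <= #|S|.
Proof.
by move=> ZS; rewrite /zero_forcing_number -minEnat -leEnat bigmin_le_cond.
Qed.

Lemma zero_forcing_numberP :
  exists2 S, zero_forcing_set e S & #|S| = zero_forcing_number e.
Proof.
rewrite /zero_forcing_number -minEnat.
have [S ZS ->] := eq_bigmin setT (zero_forcing_set e) (fun S => #|S|)
  zero_forcing_setT (fun S _ => max_card S).
by exists S.
Qed.

Hypothesis e_irr : forall x, ~~ e x x.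

Lemma forcer_degree_le S v w :
  v \in S -> e v w -> (forall u, e v u -> u \notin S -> u = w) ->
  degree e v <= #|S|.
Proof.
move=> vS evw vw; have nbr_sub : [set y | e v y] \subset w |: (S :\ v).
  apply/subsetP => u; rewrite !inE => evu.
  case: (boolP (u \in S)) => [uS|uNS]; last by rewrite (vw u evu uNS) eqxx.
  rewrite andbT orbC; apply/orP; left.
  by apply: contraNneq (e_irr v) => uv; rewrite -{2}uv.
apply: leq_trans (subset_leq_card nbr_sub) _.
by rewrite cardsU1 (cardsD1 v S) vS; case: (w \notin _).
Qed.

Lemma degree_le_zero_forcing_number c :
  c <= #|T| -> (forall x, c <= degree e x) -> c <= zero_forcing_number e.
Proof.
move=> cT c_deg; have [S ZS <-] := zero_forcing_numberP.
have [->|SnT] := eqVneq S setT; first by rewrite cardsT.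
have /subsetPn[w] : ~~ (force_step e S \subset S).
  apply: contra SnT => sub; have fixS : force_step e S = S.
    by apply/eqP; rewrite eqEsubset sub subset_force_step.
  by move/eqP: ZS; rewrite /force_closure iter_fix // => ->.
move=> /force_stepP[-> //|[v vS [evw wS vw]]] _.
exact: leq_trans (c_deg v) (forcer_degree_le vS evw vw).
Qed.

End ZeroForcing.

Section ComponentEmbedding.
Variables (T1 T : finType) (e1 : rel T1) (e : rel T) (h : T1 -> T).
Hypotheses (h_inj : injective h) (h_edge : forall x y, e (h x) (h y) = e1 x y).
Hypothesis h_closed : forall x z, e (h x) z || e z (h x) -> z \in codom h.

Lemma degree_component x : degree e (h x) = degree e1 x.
Proof.
rewrite /degree -(card_imset _ h_inj); apply: eq_card => z.
rewrite inE; apply/idP/imsetP => [ehxz|[y]]; last by rewrite inE -h_edge => ? ->.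
have /codomP[y def_z] : z \in codom h.
  by apply: (h_closed (x := x)); rewrite ehxz.
by exists y; rewrite // inE -h_edge -def_z.
Qed.

Lemma preimage_force_step (B : {set T}) (B1 : {set T1}) :
  h @^-1: B \subset B1 -> h @^-1: force_step e B \subset force_step e1 B1.
Proof.
move=> /subsetP sB; apply/subsetP => x; rewrite inE.
case/force_stepP => [hxB|[v vB [evx xB vx]]].
  by apply: (subsetP (subset_force_step _ _)); apply: sB; rewrite inE.
have /codomP[v' def_v] : v \in codom h.
  by apply: (h_closed (x := x)); rewrite evx orbT.
subst v; apply: (mem_force_step (v := v')); first by apply: sB; rewrite inE.
  by rewrite -h_edge.
move=> u e1vu uNB1; apply: h_inj; apply: vx; first by rewrite h_edge.
by apply: contra uNB1 => huB; apply: sB; rewrite inE.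
Qed.

Lemma preimage_iter_force_step t (S : {set T}) :
  h @^-1: iter t (force_step e) S \subset iter t (force_step e1) (h @^-1: S).
Proof. by elim: t => [|t IH] //=; apply: preimage_force_step. Qed.

Lemma image_force_step (B1 : {set T1}) (B : {set T}) :
  h @: B1 \subset B -> h @: force_step e1 B1 \subset force_step e B.
Proof.
move=> /subsetP sB; apply/subsetP => _ /imsetP[x /force_stepP hx ->].
case: hx => [xB1|[v vB1 [evx xB1 vx]]].
  by apply: (subsetP (subset_force_step _ _)); rewrite sB ?imset_f.
apply: (mem_force_step (v := h v)); first by rewrite sB ?imset_f.
  by rewrite h_edge.
move=> z ehvz zNB; have /codomP[u def_z] : z \in codom h.
  by apply: (h_closed (x := v)); rewrite ehvz.
subst z; congr h; apply: vx; first by rewrite -h_edge.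
by apply: contra zNB => uB1; rewrite sB ?imset_f.
Qed.

Lemma image_iter_force_step t (S1 : {set T1}) (S : {set T}) :
  h @: S1 \subset S ->
  h @: iter t (force_step e1) S1 \subset iter t (force_step e) S.
Proof. by move=> sS; elim: t => [|t IH] //=; apply: image_force_step. Qed.

Lemma zero_forcing_set_preimage (S : {set T}) :
  zero_forcing_set e S -> zero_forcing_set e1 (h @^-1: S).
Proof.
case/zero_forcing_setP=> t St; apply/zero_forcing_setP; exists t.
apply/eqP; rewrite eqEsubset subsetT.
by rewrite -(preimsetT h) -St preimage_iter_force_step.
Qed.

End ComponentEmbedding.

Section DisjointUnion.
Variables (a b : nat) (e1 : rel 'I_a) (e2 : rel 'I_b).

Definition graph_union : rel 'I_(a + b) := fun i j =>
  match split i, split j with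
  | inl x, inl y => e1 x y
  | inr x, inr y => e2 x y
  | _, _ => false
  end.

Lemma graph_union_ll x y : graph_union (lshift b x) (lshift b y) = e1 x y.
Proof. by rewrite /graph_union !(unsplitK (inl _ _)). Qed.

Lemma graph_union_rr x y : graph_union (rshift a x) (rshift a y) = e2 x y.
Proof. by rewrite /graph_union !(unsplitK (inr _ _)). Qed.

Lemma graph_union_lr x y : graph_union (lshift b x) (rshift a y) = false.
Proof. by rewrite /graph_union (unsplitK (inl _ _)) (unsplitK (inr _ _)). Qed.

Lemma graph_union_rl x y : graph_union (rshift a x) (lshift b y) = false.
Proof. by rewrite /graph_union (unsplitK (inl _ _)) (unsplitK (inr _ _)). Qed.

Definition graph_unionE :=
  (graph_union_ll, graph_union_rr, graph_union_lr, graph_union_rl).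

Lemma lshift_closed x z :
  graph_union (lshift b x) z || graph_union z (lshift b x) ->
  z \in codom (lshift b).
Proof. by case: (split_ordP z) => y ->; rewrite ?codom_f // !graph_unionE. Qed.

Lemma rshift_closed x z :
  graph_union (rshift a x) z || graph_union z (rshift a x) ->
  z \in codom (@rshift a b).
Proof. by case: (split_ordP z) => y ->; rewrite ?codom_f // !graph_unionE. Qed.

Lemma degree_union_l x : degree graph_union (lshift b x) = degree e1 x.
Proof.
exact: degree_component (@lshift_inj a b) graph_union_ll lshift_closed x.
Qed.

Lemma degree_union_r x : degree graph_union (rshift a x) = degree e2 x.
Proof.
exact: degree_component (@rshift_inj a b) graph_union_rr rshift_closed x.
Qed.

Lemma simple_union :
  simple_graph e1 -> simple_graph e2 -> simple_graph graph_union.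
Proof.
move=> [sym1 irr1] [sym2 irr2]; split=> [i j|i].
  case: (split_ordP i) => x ->; case: (split_ordP j) => y ->;
  by rewrite !graph_unionE.
by case: (split_ordP i) => x ->; rewrite graph_unionE.
Qed.

Lemma adjmx_union : adjmx graph_union = block_mx (adjmx e1) 0 0 (adjmx e2).
Proof.
apply/matrixP => i j; case: (split_ordP i) => x ->; case: (split_ordP j) => y ->;
by rewrite (block_mxEul, block_mxEur, block_mxEdl, block_mxEdr) !mxE graph_unionE.
Qed.

Lemma char_poly_union :
  char_poly (adjmx graph_union) = (char_poly (adjmx e1) * char_poly (adjmx e2))%R.
Proof.
rewrite /char_poly /char_poly_mx adjmx_union map_block_mx (scalar_mx_block a b).
by rewrite !map_mx0 opp_block_mx add_block_mx !oppr0 !addr0 det_ublock.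
Qed.

Lemma card_split_shift (S : {set 'I_(a + b)}) :
  #|S| = #|lshift b @^-1: S| + #|@rshift a b @^-1: S|.
Proof.
rewrite -!sum1_card big_split_ord /=.
by congr (_ + _); apply: eq_bigl => x; rewrite inE.
Qed.

Lemma zero_forcing_set_union S1 S2 :
  zero_forcing_set e1 S1 -> zero_forcing_set e2 S2 ->
  zero_forcing_set graph_union (lshift b @: S1 :|: @rshift a b @: S2).
Proof.
move=> /zero_forcing_setP[t1 S1T] /zero_forcing_setP[t2 S2T].
apply/zero_forcing_setP; exists (t1 + t2); apply/eqP; rewrite eqEsubset subsetT /=.
apply/subsetP => i _; case: (split_ordP i) => x ->.
  apply: (subsetP (image_iter_force_step graph_union_ll lshift_closed _
                     (subsetUl _ _))).
  by rewrite imset_f // (iter_force_step_setT_mono (leq_addr _ _) S1T).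
apply: (subsetP (image_iter_force_step graph_union_rr rshift_closed _
                   (subsetUr _ _))).
by rewrite imset_f // (iter_force_step_setT_mono (leq_addl _ _) S2T).
Qed.

Lemma zero_forcing_number_union :
  zero_forcing_number graph_union =
  zero_forcing_number e1 + zero_forcing_number e2.
Proof.
apply/eqP; rewrite eqn_leq; apply/andP; split.
  have [S1 ZS1 <-] := zero_forcing_numberP e1.
  have [S2 ZS2 <-] := zero_forcing_numberP e2.
  apply: leq_trans (zero_forcing_number_le (zero_forcing_set_union ZS1 ZS2)) _.
  apply: leq_trans (leq_card_setU _ _) _.
  by rewrite !card_imset //; [apply: rshift_inj | apply: lshift_inj].
have [S ZS <-] := zero_forcing_numberP graph_union.
rewrite card_split_shift leq_add //; apply: zero_forcing_number_le.
  exact: zero_forcing_set_preimage (@lshift_inj a b) graph_union_ll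
           lshift_closed _ ZS.
exact: zero_forcing_set_preimage (@rshift_inj a b) graph_union_rr
         rshift_closed _ ZS.
Qed.

End DisjointUnion.

Fixpoint copies n (e : rel 'I_n) m : rel 'I_(m * n) :=
  if m is m'.+1 then graph_union e (@copies n e m') else fun _ _ => false.
Arguments copies {n} e m.

Section Copies.
Variables (n : nat) (e : rel 'I_n).

Lemma simple_copies m : simple_graph e -> simple_graph (copies e m).
Proof. by move=> se; elim: m => [|m IH] //=; exact: simple_union. Qed.

Lemma zero_forcing_number_copies m :
  zero_forcing_number (copies e m) = m * zero_forcing_number e.
Proof.
elim: m => [|m IH] /=; last by rewrite zero_forcing_number_union IH mulSn.
apply/eqP; rewrite -leqn0.
rewrite (leq_trans (zero_forcing_number_le (zero_forcing_setT _))) //.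
by rewrite cardsT card_ord.
Qed.

Lemma degree_copies_le d m :
  (forall x, degree e x <= d) -> forall y, degree (copies e m) y <= d.
Proof.
move=> de; elim: m => [[]//|m IH] /= y.
by case: (split_ordP y) => x ->; rewrite (degree_union_l, degree_union_r).
Qed.

End Copies.

Lemma cospectral_union a b (e1 f1 : rel 'I_a) (e2 f2 : rel 'I_b) :
  cospectral e1 f1 -> cospectral e2 f2 ->
  cospectral (graph_union e1 e2) (graph_union f1 f2).
Proof. by rewrite /cospectral !char_poly_union => -> ->. Qed.

Lemma cospectral_copies n (e f : rel 'I_n) m :
  cospectral e f -> cospectral (copies e m) (copies f m).
Proof. by move=> cef; elim: m => [|m IH] //=; exact: cospectral_union. Qed.

Lemma graph_iso_degree_le n (e1 e2 : rel 'I_n) d :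
  graph_iso e1 e2 -> (forall x, degree e1 x <= d) -> forall y, degree e2 y <= d.
Proof.
case=> f ef de1 y; rewrite -(permKV f y).
rewrite (degree_component (@perm_inj _ f) (fun x y => esym (ef x y))) //.
by move=> x z _; rewrite -(permKV f z) codom_f.
Qed.

Definition edge_rel n (s : seq (nat * nat)) : rel 'I_n :=
  fun x y => ((x : nat, y : nat) \in s) || ((y : nat, x : nat) \in s).

Lemma simple_edge_rel n (s : seq (nat * nat)) :
  all (fun p => p.1 != p.2) s -> simple_graph (@edge_rel n s).
Proof.
move=> /allP loopless; split=> [x y|x]; first by rewrite /edge_rel orbC.
by rewrite /edge_rel orbb; apply/negP => /loopless; rewrite eqxx.
Qed.

Definition cycle4 : rel 'I_4 := edge_rel [:: (0, 1); (1, 2); (2, 3); (3, 0)].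
Definition complete2 : rel 'I_2 := edge_rel [:: (0, 1)].
Definition double_star : rel 'I_6 :=
  edge_rel [:: (0, 1); (0, 4); (0, 5); (1, 2); (1, 3)].

Definition cycle4_complete2 := graph_union cycle4 complete2.

Lemma simple_cycle4 : simple_graph cycle4.
Proof. exact: simple_edge_rel. Qed.

Lemma simple_complete2 : simple_graph complete2.
Proof. exact: simple_edge_rel. Qed.

Lemma simple_cycle4_complete2 : simple_graph cycle4_complete2.
Proof. exact: simple_union simple_cycle4 simple_complete2. Qed.

Lemma simple_double_star : simple_graph double_star.
Proof. exact: simple_edge_rel. Qed.

Lemma degree_cycle4 x : degree cycle4 x = 2.
Proof.
rewrite /degree -sum1_card big_mkcond /= !big_ord_recl big_ord0 !inE.
by case: x => [[|[|[|[|//]]]] ?].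
Qed.

Lemma degree_complete2 x : degree complete2 x = 1.
Proof.
rewrite /degree -sum1_card big_mkcond /= !big_ord_recl big_ord0 !inE.
by case: x => [[|[|//]] ?].
Qed.

Lemma degree_double_star0 : degree double_star ord0 = 3.
Proof.
by rewrite /degree -sum1_card big_mkcond /= !big_ord_recl big_ord0 !inE.
Qed.

Lemma cycle4_complete2E :
  cycle4_complete2 =2 edge_rel [:: (0, 1); (1, 2); (2, 3); (3, 0); (4, 5)].
Proof.
move=> i j; case: (split_ordP i) => x ->; case: (split_ordP j) => y ->;
rewrite /cycle4_complete2 graph_unionE;
by case: x => [[|[|[|[|//]]]] ?]; case: y => [[|[|[|[|//]]]] ?].
Qed.

Section Cospectrality.
Local Open Scope ring_scope.

Lemma char_poly_intertwine (R : idomainType) n (A B P Q : 'M[R]_n) (c : R) :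
  c != 0 -> Q *m P = c%:M -> P *m A = B *m P -> char_poly A = char_poly B.
Proof.
move=> c_neq0 QP PA; have detP_neq0 : \det P != 0.
  apply: contra_neq (expf_neq0 n c_neq0) => detP0.
  by rewrite -det_scalar -QP det_mulmx detP0 mulr0.
have PxA : map_mx polyC P *m char_poly_mx A = char_poly_mx B *m map_mx polyC P.
  by rewrite /char_poly_mx mulmxBr mulmxBl -!map_mxM PA scalar_mxC.
apply: (mulfI (x := (\det P)%:P)); first by rewrite polyC_eq0.
by rewrite -det_map_mx -det_mulmx mulrC -det_mulmx -PxA det_mulmx.
Qed.

Definition mx_of_seqs n (s : seq (seq int)) : 'M[int]_n :=
  \matrix_(i, j) nth 0 (nth [::] s i) j.

(* [intertwiner] maps the adjacency matrix of C4 + K2 to that of the double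
   star by conjugation over the rationals (it solves P A = B P), and
   [intertwiner_inv3] is 3 times its inverse. *)
Definition intertwiner : 'M[int]_6 := mx_of_seqs 6
 [:: [:: -1; 0; -1; 0; 0; -1];
     [:: 0; -1; 0; -1; 1; 0];
     [:: -1; 0; 0; 0; 0; 1];
     [:: 0; 0; -1; 0; 0; 1];
     [:: 0; 0; 0; -1; -1; 0];
     [:: 0; -1; 0; 0; -1; 0]]%Z.

Definition intertwiner_inv3 : 'M[int]_6 := mx_of_seqs 6
 [:: [:: -1; 0; -2; 1; 0; 0];
     [:: 0; -1; 0; 0; 1; -2];
     [:: -1; 0; 1; -2; 0; 0];
     [:: 0; -1; 0; 0; -2; 1];
     [:: 0; 1; 0; 0; -1; -1];
     [:: -1; 0; 1; 1; 0; 0]]%Z.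

Lemma intertwinerK : intertwiner_inv3 *m intertwiner = 3%:M.
Proof.
apply/matrixP => i j; rewrite !mxE !big_ord_recl !big_ord0 !mxE.
by case: i => [[|[|[|[|[|[|//]]]]]] ?]; case: j => [[|[|[|[|[|[|//]]]]]] ?].
Qed.

Lemma intertwiner_adjmx :
  intertwiner *m adjmx cycle4_complete2 = adjmx double_star *m intertwiner.
Proof.
apply/matrixP => i j.
rewrite !mxE !big_ord_recl !big_ord0 !mxE !cycle4_complete2E.
by case: i => [[|[|[|[|[|[|//]]]]]] ?]; case: j => [[|[|[|[|[|[|//]]]]]] ?].
Qed.

Lemma cospectral_cycle4_complete2_double_star :
  cospectral cycle4_complete2 double_star.
Proof. exact: char_poly_intertwine _ intertwinerK intertwiner_adjmx. Qed.

End Cospectrality.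

(* The leaves 4 and 2 force the centres 0 and 1, which then force the leaves
   5 and 3. *)
Lemma zero_forcing_set_double_star :
  zero_forcing_set double_star [set x : 'I_6 | val x \in [:: 2; 4]].
Proof.
set S0 := [set x | _].
have S1_sub :
    [set x : 'I_6 | val x \in [:: 0; 1; 2; 4]] \subset force_step double_star S0.
  apply/subsetP => -[[|[|[|[|[|[|//]]]]]] ?]; rewrite inE //= => _.
  - apply: (mem_force_step (v := Ordinal (isT : 4 < 6))); rewrite ?inE //.
    by case=> [[|[|[|[|[|[|//]]]]]] ?] // _ _; apply/eqP.
  - apply: (mem_force_step (v := Ordinal (isT : 2 < 6))); rewrite ?inE //.
    by case=> [[|[|[|[|[|[|//]]]]]] ?] // _ _; apply/eqP.
  - by apply: (subsetP (subset_force_step _ _)); rewrite inE.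
  - by apply: (subsetP (subset_force_step _ _)); rewrite inE.
apply/zero_forcing_setP; exists 2; apply/eqP; rewrite eqEsubset subsetT /=.
have inS1 u : val u \in [:: 0; 1; 2; 4] -> u \in force_step double_star S0.
  by move=> u_in; rewrite (subsetP S1_sub) // inE.
apply/subsetP => -[[|[|[|[|[|[|//]]]]]] ?] _;
  try by apply: (subsetP (subset_force_step _ _)); apply: inS1.
- apply: (mem_force_step (v := Ordinal (isT : 1 < 6))).
    by apply: inS1.
  by [].
  case=> [[|[|[|[|[|[|//]]]]]] ?] // _;
  first [by rewrite inS1 | by move=> _; apply/eqP].
- apply: (mem_force_step (v := Ordinal (isT : 0 < 6))).
    by apply: inS1.
  by [].
  case=> [[|[|[|[|[|[|//]]]]]] ?] // _;
  first [by rewrite inS1 | by move=> _; apply/eqP].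
Qed.

Lemma zero_forcing_number_double_star_le : zero_forcing_number double_star <= 2.
Proof.
apply: leq_trans (zero_forcing_number_le zero_forcing_set_double_star) _.
by rewrite -sum1_card big_mkcond /= !big_ord_recl big_ord0 !inE.
Qed.

Lemma zero_forcing_number_cycle4_complete2_ge :
  3 <= zero_forcing_number cycle4_complete2.
Proof.
rewrite zero_forcing_number_union (@leq_add 2 1) //.
  apply: degree_le_zero_forcing_number; first by case: simple_cycle4.
    by rewrite card_ord.
  by move=> x; rewrite degree_cycle4.
apply: degree_le_zero_forcing_number; first by case: simple_complete2.
  by rewrite card_ord.
by move=> x; rewrite degree_complete2.
Qed.

Lemma degree_cycle4_complete2_le x : degree cycle4_complete2 x <= 2.
Proof.
case: (split_ordP x) => y ->.
  by rewrite degree_union_l degree_cycle4.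
by rewrite degree_union_r degree_complete2.
Qed.

Theorem corollary5p2 :
  forall k : nat, 0 < k ->
  exists (n : nat) (e1 e2 : rel 'I_n),
    [/\ simple_graph e1, simple_graph e2, ~ graph_iso e1 e2,
        cospectral e1 e2 &
        zero_forcing_number e2 + k < zero_forcing_number e1].
Proof.
move=> k _.
exists (k.+1 * 6), (copies cycle4_complete2 k.+1), (copies double_star k.+1).
split.
- exact: simple_copies simple_cycle4_complete2.
- exact: simple_copies simple_double_star.
- move/graph_iso_degree_le.
  move=> /(_ 2 (degree_copies_le degree_cycle4_complete2_le)).
  move=> /(_ (lshift (k * 6) (ord0 : 'I_6))).
  rewrite (degree_union_l double_star (copies double_star k)).
  by rewrite degree_double_star0.
- exact: cospectral_copies cospectral_cycle4_complete2_double_star.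
- rewrite !zero_forcing_number_copies.
  apply: leq_trans
    (leq_mul (leqnn k.+1) zero_forcing_number_cycle4_complete2_ge).
  apply: leq_trans (_ : k.+1 * 2 + k.+1 <= _); last by rewrite -mulnSr.
  by rewrite -addnS leq_add2r leq_mul2l zero_forcing_number_double_star_le orbT.
Qed.
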